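(* Let $U$ be a reduced $\mathbb{Z}_pG$-lattice, identified with $\ker f\subseteq F=\bigoplus_{i\in I}F_{(i)}$ as below. Then $$I_NU\subseteq U\cap\Big(\bigoplus_{H\neq N,\ |H|=p}F_{(H)}\Big),$$ with equality if and only if $U_N$ is a $\mathbb{Z}_p$-lattice (i.e. $\mathbb{Z}_p$-torsion free).
   Context: Let $p$ be a prime and $G=C_p\times C_p=N\times C$, where $N=\langle n\rangle$ and $C=\langle c\rangle$ are cyclic of order $p$. A $\mathbb{Z}_pG$-lattice is a $\mathbb{Z}_pG$-module free of finite rank over $\mathbb{Z}_p$. For $H\le G$ write $\widehat H=\sum_{h\in H}h$ and $I_H$ for the augmentation ideal of $\mathbb{Z}_pH$ (generated by the $1-h$, $h\in H$). For a module $U$, $U_N=U/I_NU$. Let $I=\{0\}\cup\{H\le G:|H|=p\}$. Put $e_0=\frac1{p^2}\widehat G$ and $e_H=\frac1{p^2}(p\widehat H-\widehat G)$ for $|H|=p$ (the primitive idempotents of $\mathbb{Q}_pG$). For $i\in I$, $\Lambda_{(i)}=e_i\mathbb{Z}_pG$, regarded both as a ring (quotient of $\mathbb{Z}_pG$ via $x\mapsto e_ix$) and as a module. A lattice is reduced if it has no direct summand isomorphic to $\mathbb{Z}_pG$ or to any $\Lambda_{(i)}$. A diagram is a tuple $(V;V_{(i)},\,i\in I)$ where $V$ is a finitely generated $\mathbb{F}_pG$-module, each $V_{(i)}$ is a submodule, $\sum_{i\neq j}V_{(i)}=V$ for every $j\in I$, and the action of $\mathbb{Z}_pG$ on each $V_{(i)}$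 factors through $\mathbb{Z}_pG\to\Lambda_{(i)}$. The diagram of a reduced lattice $U$: with $U\subseteq\mathbb{Q}_p\otimes U$, $U_{(i)}=e_iU$, $U_*=\bigoplus_iU_{(i)}$, set $V=U_*/U$, $V_{(i)}=(U_{(i)}+U)/U$. Conversely, from a diagram one forms $F_{(i)}$ = direct sum of $\dim_{\mathbb{F}_p}(V_{(i)}/\mathrm{Rad}\,V_{(i)})$ copies of $\Lambda_{(i)}$, $F=\bigoplus_{i\in I}F_{(i)}$, surjective $\Lambda_{(i)}$-homomorphisms $f_i:F_{(i)}\to V_{(i)}$ inducing isomorphisms $F_{(i)}/\mathrm{Rad}\,F_{(i)}\to V_{(i)}/\mathrm{Rad}\,V_{(i)}$, and $f=\sum_i f_i:F\to V$; the reduced lattice of the diagram is $\ker f$. These constructions are mutually inverse up to isomorphism. Hence for a reduced lattice $U$ with diagram $V_*$ we fix such $F,f$ and identify $U=\ker f\subseteq F$; for $x\in F$, $\overline{x}=f(x)\in V$, and elements of $F$ are written $x=\sum_i x_i$ with $x_i\in F_{(i)}$. *)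

From HB Require Import structures.
From mathcomp Require Import all_boot all_order all_algebra all_fingroup.
From mathcomp Require Import boolp.
Set Implicit Arguments. Unset Strict Implicit. Unset Printing Implicit Defensive.
Import GRing.Theory.
Local Open Scope ring_scope.

(* The ring Z_p of p-adic integers, as the inverse limit of Z/p^k Z:          *)
(* a p-adic integer is a sequence (x_k)_k of natural numbers with             *)
(*   x_k = x_(k+1) mod p^k   (so 0 <= x_k < p^k is the residue mod p^k).      *)
(* The base is q := maxn 2 p, which equals p for every prime p (this only    *)
(* serves to make padicInt a genuine ring for every value of the parameter).       *)

Definition zp_base (p : nat) : nat := maxn 2 p.
Definition zp_mod (p k : nat) : nat := (zp_base p ^ k)%N.

Record padicInt (p : nat) := MkZp {
  zp_val : nat -> nat ;
  zp_valP : forall k, zp_val k = (zp_val k.+1 %% zp_mod p k)%N }.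

HB.instance Definition _ p := gen_eqMixin (padicInt p).
HB.instance Definition _ p := gen_choiceMixin (padicInt p).

Section ZpRing.
Variable p : nat.
Local Notation m := (zp_mod p).

Lemma zp_mod_gt0 k : (0 < m k)%N.
Proof. by rewrite /zp_mod expn_gt0 /zp_base leq_max. Qed.

Lemma zp_mod_dvd k : (m k %| m k.+1)%N.
Proof. by rewrite /zp_mod expnS dvdn_mull. Qed.

Lemma zp_eq (x y : padicInt p) : zp_val x =1 zp_val y -> x = y.
Proof.
case: x => x Hx; case: y => y Hy /= /funext Exy; subst y.
by rewrite (Prop_irrelevance Hx Hy).
Qed.

Lemma zp_valK (x : padicInt p) k : (zp_val x k %% m k)%N = zp_val x k.
Proof. by rewrite {1}zp_valP modn_mod -zp_valP. Qed.

Lemma zp_val_lt (x : padicInt p) k : (zp_val x k < m k)%N.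
Proof. by rewrite -zp_valK ltn_pmod // zp_mod_gt0. Qed.

Lemma zp_cond (F : nat -> nat -> nat) (x y : padicInt p) :
  (forall d a b, (F a b %% d = F (a %% d) (b %% d) %% d)%N) ->
  forall k, ((F (zp_val x k) (zp_val y k)) %% m k =
     (F (zp_val x k.+1) (zp_val y k.+1) %% m k.+1) %% m k)%N.
Proof.
move=> HF k; rewrite modn_dvdm ?zp_mod_dvd // [in RHS]HF.
by rewrite -!zp_valP.
Qed.

Definition zp0 : padicInt p := @MkZp p (fun _ => 0%N) (fun k => esym (mod0n _)).

Lemma zp1_cond k : (1 %% m k = (1 %% m k.+1) %% m k)%N.
Proof. by rewrite modn_dvdm // zp_mod_dvd. Qed.
Definition zp1 : padicInt p := @MkZp p (fun k => 1 %% m k)%N zp1_cond.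

Definition zpadd (x y : padicInt p) : padicInt p :=
  @MkZp p (fun k => (zp_val x k + zp_val y k) %% m k)%N
          (zp_cond x y (fun d a b => esym (modnDm a b d))).

Definition zpmul (x y : padicInt p) : padicInt p :=
  @MkZp p (fun k => (zp_val x k * zp_val y k) %% m k)%N
          (zp_cond x y (fun d a b => esym (modnMm a b d))).

Lemma zpopp_cond (x : padicInt p) k :
  ((m k - zp_val x k) %% m k = ((m k.+1 - zp_val x k.+1) %% m k.+1) %% m k)%N.
Proof.
rewrite modn_dvdm ?zp_mod_dvd //.
have [d Hd] : exists d, m k.+1 = (d * m k)%N by apply/dvdnP; apply: zp_mod_dvd.
have l1 := zp_val_lt x k.+1; have l0 := zp_val_lt x k.
apply/eqP; rewrite -(eqn_modDr (zp_val x k)) subnK 1?ltnW // modnn.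
rewrite (zp_valP x k) modnDmr subnK 1?ltnW // Hd modnMl //.
Qed.
Definition zpopp (x : padicInt p) : padicInt p :=
  @MkZp p (fun k => (m k - zp_val x k) %% m k)%N (zpopp_cond x).

Lemma zpaddA : associative zpadd.
Proof. by move=> x y z; apply: zp_eq => k /=; rewrite modnDml modnDmr addnA. Qed.
Lemma zpaddC : commutative zpadd.
Proof. by move=> x y; apply: zp_eq => k /=; rewrite addnC. Qed.
Lemma zpadd0 : left_id zp0 zpadd.
Proof. by move=> x; apply: zp_eq => k /=; rewrite add0n zp_valK. Qed.
Lemma zpaddN : left_inverse zp0 zpopp zpadd.
Proof.
move=> x; apply: zp_eq => k /=.
by rewrite modnDml subnK ?modnn // ltnW // zp_val_lt.
Qed.

HB.instance Definition _ := GRing.isZmodule.Build (padicInt p) zpaddA zpaddC zpadd0 zpaddN.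

Lemma zpmulA : associative zpmul.
Proof. by move=> x y z; apply: zp_eq => k /=; rewrite modnMml modnMmr mulnA. Qed.
Lemma zpmulC : commutative zpmul.
Proof. by move=> x y; apply: zp_eq => k /=; rewrite mulnC. Qed.
Lemma zpmul1 : left_id zp1 zpmul.
Proof. by move=> x; apply: zp_eq => k /=; rewrite modnMml mul1n zp_valK. Qed.
Lemma zpmulD : left_distributive zpmul (+%R : padicInt p -> padicInt p -> padicInt p).
Proof.
move=> x y z; apply: zp_eq => k /=.
by rewrite modnMml mulnDl modnDm.
Qed.
Lemma zp1_neq0 : zp1 != 0 :> padicInt p.
Proof.
apply/eqP => /(congr1 (fun x => zp_val x 1%N)) /=.
rewrite /zp_mod expn1 modn_small //.
by rewrite /zp_base leq_max.
Qed.

HB.instance Definition _ :=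
  GRing.Zmodule_isComNzRing.Build (padicInt p) zpmulA zpmulC zpmul1 zpmulD zp1_neq0.

Definition zp_red (x : padicInt p) : 'F_p := (zp_val x 1%N)%:R.

End ZpRing.

(* Group algebra Z_p G, where G is the whole finite group gT.                *)
Section GroupAlgebra.
Variables (p : nat) (gT : finGroupType).

(* elements of Z_p G = Z_p-valued functions on G (a = sum_g a(g) g) *)
Definition ZpG := {ffun gT -> padicInt p}.

Definition gmul (a b : ZpG) : ZpG :=
  [ffun g => \sum_(h : gT) a h * b (h^-1 * g)%g].

Definition gelt (g : gT) : ZpG := [ffun x => (x == g)%:R].

Definition ghat (H : {set gT}) : ZpG := [ffun x => (x \in H)%:R].

(* The index set I = {0} u {H <= G : |H| = p}: None stands for 0, Some H for H *)
Definition validI (i : option {group gT}) : bool :=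
  if i is Some H then #|H| == p else true.

(* eps i = p^2 e_i, which lies in Z_p G:  eps 0 = \hat G,
   eps H = p \hat H - \hat G. *)
Definition eps (i : option {group gT}) : ZpG :=
  if i is Some H then [ffun x => p%:R * ghat H x - ghat [set: gT] x]
  else ghat [set: gT].

(* Lambda_(i) = e_i Z_pG, realized (via the Z_pG-isomorphism y |-> p^2 y,
   p^2 being a non-zero-divisor of Q_pG) as the ideal eps_i Z_pG of Z_pG. *)
Definition Lambda (i : option {group gT}) (y : ZpG) : Prop :=
  exists z, y = gmul (eps i) z.

Definition kerLambda (i : option {group gT}) (a : ZpG) : Prop :=
  gmul (eps i) a = 0.

(* augmentation ideal I_H of Z_p H: generated (in Z_p H) by the 1 - h *)
Definition augI (H : {set gT}) (a : ZpG) : Prop :=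
  exists b : gT -> ZpG, (forall h g, g \notin H -> b h g = 0) /\
    a = \sum_(h in H) gmul (b h) (gelt 1 - gelt h).

(* Jacobson radical of the local ring Z_p G: kernel of Z_pG -> F_p,
   a |-> (augmentation of a) mod p *)
Definition Jrad (a : ZpG) : Prop := zp_red (\sum_(g : gT) a g) = 0.

(* J indexes the cyclic summands of F; summand j is a copy of Lambda_(tau j);
   F_(i) is the sum of the summands j with tau j = i. *)
Variables (J : finType) (tau : J -> option {group gT}).

Definition FF := {ffun J -> ZpG}.

Definition gact (a : ZpG) (x : FF) : FF := [ffun j => gmul a (x j)].

Definition zscale (r : padicInt p) (x : FF) : FF := [ffun j => [ffun g => r * x j g]].

Definition inF (x : FF) : Prop := forall j, Lambda (tau j) (x j).

Definition inFi (i : option {group gT}) (x : FF) : Prop :=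
  inF x /\ forall j, tau j != i -> x j = 0.

Definition inFnonN (N : {set gT}) (x : FF) : Prop :=
  inF x /\ forall j, (if tau j is Some H then (H : {set gT}) == N else true) -> x j = 0.

Definition idealmul (A : ZpG -> Prop) (M : FF -> Prop) (x : FF) : Prop :=
  exists (k : nat) (a : 'I_k -> ZpG) (u : 'I_k -> FF),
    (forall t, A (a t) /\ M (u t)) /\ x = \sum_(t < k) gact (a t) (u t).

Definition RadF (i : option {group gT}) : FF -> Prop := idealmul Jrad (inFi i).

Variables (V : vectType 'F_p) (rho : gT -> 'End(V)).

Definition is_rep : Prop :=
  rho 1%g = \1%VF /\ forall g h, rho (g * h)%g = (rho g \o rho h)%VF.

Definition Vact (a : ZpG) (v : V) : V := \sum_(g : gT) zp_red (a g) *: rho g v.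

Definition RadV (W : {vspace V}) (v : V) : Prop :=
  exists (k : nat) (a : 'I_k -> ZpG) (w : 'I_k -> V),
    (forall t, Jrad (a t) /\ w t \in W) /\ v = \sum_(t < k) Vact (a t) (w t).

Definition is_diagram (Vi : option {group gT} -> {vspace V}) : Prop :=
  [/\ forall i, validI i -> forall g, (rho g @: Vi i <= Vi i)%VS,
      forall j, validI j ->
        (\sum_(i | validI i && (i != j)) Vi i)%VS = fullv
    & forall i, validI i -> forall a, kerLambda i a ->
        forall v, v \in Vi i -> Vact a v = 0].

Definition is_diagram_cover (Vi : option {group gT} -> {vspace V})
    (f : FF -> V) : Prop :=
  [/\ forall x y, inF x -> inF y -> f (x + y) = f x + f y,
      forall a x, inF x -> f (gact a x) = Vact a (f x)
    & forall i, validI i ->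
      [/\ forall x, inFi i x -> f x \in Vi i,
          forall v, v \in Vi i -> exists2 x, inFi i x & f x = v
        & forall x, inFi i x -> RadV (Vi i) (f x) -> RadF i x]].

End GroupAlgebra.

From Pilot Require Import Defs.
From HB Require Import structures.
From mathcomp Require Import all_boot all_order all_algebra all_fingroup.
From mathcomp Require Import boolp.
Import GRing.Theory.
Local Open Scope ring_scope.
Set Implicit Arguments. Unset Strict Implicit.

(* For h in N, (1 - h) kills e_0 and e_N, so I_N U lies in U (f being
   Z_pG-linear) and in the sum of the F_(H), H <> N.  Conversely
   \hat N \hat H = \hat G for every H <> N of order p, so \hat N annihilates
   e_H; hence for x in U /\ (+)_{H<>N} F_(H),
     p x = (|N| - \hat N) x = \sum_(h in N) (1 - h) x  lies in I_N U.
   The quotient of U /\ (+)_{H<>N} F_(H) by I_N U is therefore killed by p,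
   and it vanishes exactly when U_N has no Z_p-torsion, Z_p being a domain. *)

Section PadicIntegers.
Variable p : nat.
Hypothesis p_prime : prime p.

Lemma zp_val_natr (m k : nat) : zp_val (m%:R : padicInt p) k = (m %% zp_mod p k)%N.
Proof.
elim: m => [|m IHm]; first by rewrite mod0n.
by rewrite mulrS /= IHm modnDm.
Qed.

Lemma zp_modE k : zp_mod p k = (p ^ k)%N.
Proof. by rewrite /zp_mod /zp_base (maxn_idPr (prime_gt1 p_prime)). Qed.

Lemma zp_natr_p_neq0 : (p%:R : padicInt p) != 0.
Proof.
apply/eqP => /(congr1 (fun x => zp_val x 2)) /=; rewrite zp_val_natr zp_modE modn_small.
  by move=> p0; move: p_prime; rewrite p0.
by rewrite -[X in (X < _)%N]expn1 ltn_exp2l ?prime_gt1.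
Qed.

Lemma zp_val_trunc (x : padicInt p) j k : (j <= k)%N ->
  zp_val x j = (zp_val x k %% p ^ j)%N.
Proof.
move/subnKC <-; elim: (k - j)%N => [|d IHd].
  by rewrite addn0 -zp_modE zp_valK.
rewrite IHd addnS (zp_valP x (j + d)) zp_modE modn_dvdm //.
by rewrite dvdn_exp2l // leq_addr.
Qed.

Lemma zp_valuation (x : padicInt p) : x != 0 ->
  exists e, (forall k, (e <= k)%N -> (p ^ e %| zp_val x k)%N) /\
            (forall k, (e < k)%N -> ~~ (p ^ e.+1 %| zp_val x k)%N).
Proof.
move=> x_neq0.
have [k0 x_k0_neq0] : exists k, zp_val x k != 0%N.
  apply: contrapT => all0; case/eqP: x_neq0; apply: zp_eq => k /=.
  by apply/eqP/negPn/negP => x_k_neq0; apply: all0; exists k.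
case: (@ex_minnP (fun k => zp_val x k != 0%N) (ex_intro _ k0 x_k0_neq0)).
case=> [|e] x_d_neq0 d_min.
  by move: (zp_val_lt x 0); rewrite zp_modE expn0 ltnS leqn0 (negPf x_d_neq0).
have x_e0 : zp_val x e = 0%N.
  by apply/eqP; case: eqVneq => // /d_min; rewrite ltnn.
by exists e; split=> k le_ek; rewrite /dvdn -zp_val_trunc // ?x_e0.
Qed.

Lemma zp_mulf_neq0 (r y : padicInt p) : r != 0 -> y != 0 -> r * y != 0.
Proof.
move=> /zp_valuation[e [dvd_r ndvd_r]] /zp_valuation[e' [dvd_y ndvd_y]].
have p_gt0 := prime_gt0 p_prime.
have lt_eK : (e < (e + e').+1)%N by rewrite ltnS leq_addr.
have lt_e'K : (e' < (e + e').+1)%N by rewrite ltnS leq_addl.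
have [X rK] := dvdnP (dvd_r _ (ltnW lt_eK)).
have [Y yK] := dvdnP (dvd_y _ (ltnW lt_e'K)).
have p_ndvd_X : ~~ (p %| X)%N.
  by rewrite -(@dvdn_pmul2r (p ^ e)) ?expn_gt0 ?p_gt0 // -expnS -rK ndvd_r.
have p_ndvd_Y : ~~ (p %| Y)%N.
  by rewrite -(@dvdn_pmul2r (p ^ e')) ?expn_gt0 ?p_gt0 // -expnS -yK ndvd_y.
apply/eqP => /(congr1 (fun x => zp_val x (e + e').+1)) /=.
rewrite zp_modE rK yK mulnACA -expnD => /eqP; rewrite -/(dvdn _ _).
rewrite expnS dvdn_pmul2r ?expn_gt0 ?p_gt0 // Euclid_dvdM //.
by rewrite (negPf p_ndvd_X) (negPf p_ndvd_Y).
Qed.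

Lemma zp_lreg (r : padicInt p) : r != 0 -> GRing.lreg r.
Proof.
move=> r_neq0 y z /eqP; rewrite -subr_eq0 -mulrBr; apply: contraTeq => neq_yz.
by rewrite zp_mulf_neq0 // subr_eq0.
Qed.

End PadicIntegers.

Section GroupAlgebra.
Variables (p : nat) (gT : finGroupType).
Local Notation A := (ZpG p gT).
Implicit Types a b y : A.

Lemma gmulE a b g : gmul a b g = \sum_h a h * b (h^-1 * g)%g.
Proof. by rewrite ffunE. Qed.

Lemma gmulDl a b y : gmul (a + b) y = gmul a y + gmul b y.
Proof.
apply/ffunP => g; rewrite !ffunE -big_split; apply: eq_bigr => h _.
by rewrite !ffunE mulrDl.
Qed.

Lemma gmulDr a b y : gmul y (a + b) = gmul y a + gmul y b.
Proof.
apply/ffunP => g; rewrite !ffunE -big_split; apply: eq_bigr => h _.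
by rewrite !ffunE mulrDr.
Qed.

Lemma gmul0l y : gmul 0 y = 0.
Proof. by apply/ffunP => g; rewrite !ffunE big1 // => h _; rewrite ffunE mul0r. Qed.

Lemma gmul0r y : gmul y 0 = 0.
Proof. by apply/ffunP => g; rewrite !ffunE big1 // => h _; rewrite ffunE mulr0. Qed.

Lemma gmulNl a y : gmul (- a) y = - gmul a y.
Proof.
apply/ffunP => g; rewrite !ffunE -sumrN; apply: eq_bigr => h _.
by rewrite !ffunE mulNr.
Qed.

Lemma gmulBl a b y : gmul (a - b) y = gmul a y - gmul b y.
Proof. by rewrite gmulDl gmulNl. Qed.

Lemma gmul_suml (I : Type) (r : seq I) (P : pred I) (F : I -> A) y :
  gmul (\sum_(i <- r | P i) F i) y = \sum_(i <- r | P i) gmul (F i) y.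
Proof. exact: (big_morph (fun a => gmul a y) (fun a b => gmulDl a b y) (gmul0l y)). Qed.

Lemma gmulA a b y : gmul (gmul a b) y = gmul a (gmul b y).
Proof.
apply/ffunP => g; rewrite !gmulE.
under eq_bigr => h _ do rewrite gmulE mulr_suml.
rewrite exchange_big /=; apply: eq_bigr => k _.
rewrite gmulE mulr_sumr (reindex_inj (mulgI k)) /=; apply: eq_bigr => m _.
by rewrite mulKg invMg mulgA mulrA.
Qed.

Lemma gmulC : abelian [set: gT] -> commutative (@gmul p gT).
Proof.
move=> /centsP abG a b; apply/ffunP => g; rewrite !gmulE.
have inj_k : injective (fun k : gT => (k^-1 * g)%g) by move=> ? ? /mulIg/invg_inj.
rewrite (reindex_inj inj_k) /=.
apply: eq_bigr => k _; rewrite invMg invgK mulrC.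
by rewrite (abG _ (in_setT (g^-1)%g) _ (in_setT k)) mulgKV.
Qed.

Lemma gmul_gelt x y : gmul (gelt p x) y = [ffun g => y (x^-1 * g)%g].
Proof.
apply/ffunP => g; rewrite gmulE !ffunE (bigD1 x) //= ffunE eqxx mul1r.
by rewrite big1 ?addr0 // => h /negPf neq_hx; rewrite ffunE neq_hx mul0r.
Qed.

Lemma gmul1 y : gmul (gelt p 1) y = y.
Proof. by apply/ffunP => g; rewrite gmul_gelt ffunE invg1 mul1g. Qed.

Lemma ghatE (H : {set gT}) y g :
  gmul (ghat p H) y g = \sum_(h in H) y (h^-1 * g)%g.
Proof.
rewrite gmulE [RHS]big_mkcond /=; apply: eq_bigr => h _.
by rewrite ffunE; case: (h \in H); rewrite ?mul1r ?mul0r.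
Qed.

Lemma gmul_sum_aug (H : {set gT}) y :
  gmul (\sum_(h in H) (gelt p 1 - gelt p h)) y = y *+ #|H| - gmul (ghat p H) y.
Proof.
apply/ffunP => g; rewrite [in RHS]ffunE ffunMnE [in RHS]ffunE ghatE gmul_suml sum_ffunE.
rewrite -sumr_const -sumrB; apply: eq_bigr => h _.
by rewrite gmulBl gmul1 gmul_gelt !ffunE.
Qed.

Lemma augI_sum_aug (H : {group gT}) : augI H (\sum_(h in H) (gelt p 1 - gelt p h)).
Proof.
exists (fun=> gelt p 1); split.
  by move=> _ g gH; rewrite ffunE; case: eqP => // g1; rewrite g1 group1 in gH.
by apply: eq_bigr => h _; rewrite gmul1.
Qed.

Lemma gmul_aug_eps (N : {group gT}) (i : option {group gT}) h :
  (if i is Some H then (H : {set gT}) == N else true) -> h \in N ->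
  gmul (gelt p 1 - gelt p h) (eps p i) = 0.
Proof.
move=> i_N hN; apply/ffunP => g; rewrite gmulBl gmul1 gmul_gelt !ffunE.
by case: i i_N => [H /eqP eqHN|_] /=; rewrite !ffunE !in_setT ?eqHN ?groupMl ?groupV ?subrr.
Qed.

Lemma augI_gmul_eps (N : {group gT}) (i : option {group gT}) a :
  augI N a -> (if i is Some H then (H : {set gT}) == N else true) ->
  gmul a (eps p i) = 0.
Proof.
move=> [b [_ ->]] i_N; rewrite gmul_suml big1 // => h hN.
by rewrite gmulA (gmul_aug_eps i_N hN) gmul0r.
Qed.

Lemma ghat_gmul_eps_complement (N H : {group gT}) : #|N| = p ->
  N :&: H = 1%g -> (N * H)%g = [set: gT] -> gmul (ghat p N) (eps p (Some H)) = 0.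
Proof.
move=> cardN trivNH NH; apply/ffunP => g; rewrite ghatE ffunE.
have /mulsgP[a b aN bH ->] : g \in (N * H)%g by rewrite NH in_setT.
under eq_bigr => h _ do rewrite !ffunE in_setT.
rewrite sumrB sumr_const cardN -mulr_sumr (bigD1 a) //= mulKg bH big1 ?addr0.
  by rewrite mulr1 subrr.
move=> h /andP[hN neq_ha]; case abH: (h^-1 * (a * b) \in H)%g => //.
have : (h^-1 * a)%g \in N :&: H.
  rewrite inE groupM ?groupV //=.
  have -> : (h^-1 * a = h^-1 * (a * b) * b^-1)%g by rewrite mulgA mulgK.
  by rewrite groupM ?groupV.
rewrite trivNH => /set1gP ha1; case/eqP: neq_ha.
by rewrite -[a](mulKVg h) ha1 mulg1.
Qed.

End GroupAlgebra.

Lemma prime_order_complement (gT : finGroupType) (p : nat) (N H : {group gT}) :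
  prime p -> #|N| = p -> #|H| = p -> #|[set: gT]| = (p * p)%N -> H :!=: N ->
  N :&: H = 1%g /\ (N * H)%g = [set: gT].
Proof.
move=> p_prime cardN cardH cardG neqHN.
have trivNH : N :&: H = 1%g.
  apply: prime_TIg; first by rewrite cardN.
  by apply: (contraNN _ neqHN) => sNH; rewrite eq_sym eqEcard sNH cardN cardH leqnn.
split=> //; apply/eqP.
by rewrite eqEcard subsetT cardG TI_cardMg // cardN cardH leqnn.
Qed.

Section AugmentationSubmodule.
Variables (p : nat) (gT : finGroupType) (J : finType) (tau : J -> option {group gT}).
Variables (V : vectType 'F_p) (rho : gT -> 'End(V)) (f : FF p gT J -> V).
Variable N : {group gT}.
Local Notation gactF := (@Defs.gact p gT J).
Local Notation U := (fun x => inF tau x /\ f x = 0).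
Local Notation INU := (idealmul (@augI p gT N) U).
Implicit Types (x y u : FF p gT J) (a : ZpG p gT).

Hypothesis abG : abelian [set: gT].
Hypothesis fD : forall x y, inF tau x -> inF tau y -> f (x + y) = f x + f y.
Hypothesis f_gact : forall a x, inF tau x -> f (gactF a x) = Vact rho a (f x).

Lemma inF0 : inF tau (0 : FF p gT J).
Proof. by move=> j; exists 0; rewrite gmul0r ffunE. Qed.

Lemma inFD x y : inF tau x -> inF tau y -> inF tau (x + y).
Proof.
move=> x_inF y_inF j; have [z1 xj] := x_inF j; have [z2 yj] := y_inF j.
by exists (z1 + z2); rewrite ffunE xj yj gmulDr.
Qed.

Lemma inF_sum k (u : 'I_k -> FF p gT J) :
  (forall t, inF tau (u t)) -> inF tau (\sum_(t < k) u t).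
Proof. by move=> u_inF; apply: (big_ind (inF tau)) => //; [apply: inF0 | apply: inFD]. Qed.

Lemma inF_gact a x : inF tau x -> inF tau (gactF a x).
Proof.
move=> x_inF j; have [z xj] := x_inF j; exists (gmul a z).
by rewrite ffunE xj -!gmulA (gmulC abG a).
Qed.

Lemma f_sum k (u : 'I_k -> FF p gT J) : (forall t, inF tau (u t)) ->
  f (\sum_(t < k) u t) = \sum_(t < k) f (u t).
Proof.
have f0 : f 0 = 0 by apply/(addrI (f 0)); rewrite -fD ?addr0 //; apply: inF0.
elim: k u => [|k IHk] u u_inF; first by rewrite !big_ord0.
by rewrite !big_ord_recr /= fD ?IHk //; apply: inF_sum.
Qed.

Lemma idealmul_augI_ker x : INU x -> U x.
Proof.
case=> k [a [u [au_in ->]]]; have u_inF t : inF tau (u t) by case: (au_in t) => _ [].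
split; first by apply: inF_sum => t; apply: inF_gact.
rewrite f_sum => [|t]; last exact: inF_gact.
apply: big1 => t _; case: (au_in t) => _ [u_t_inF fu_t0].
by rewrite f_gact // fu_t0 /Vact big1 // => g _; rewrite linear0 scaler0.
Qed.

Lemma idealmul_augI_nonN x : INU x -> inFnonN tau N x.
Proof.
move=> INUx; split; first by case: (idealmul_augI_ker INUx).
case: INUx => k [a [u [au_in ->]]] j tau_j_N.
rewrite sum_ffunE; apply: big1 => t _; rewrite ffunE.
case: (au_in t) => a_t_aug [u_t_inF _]; have [z ->] := u_t_inF j.
by rewrite -gmulA (augI_gmul_eps a_t_aug tau_j_N) gmul0l.
Qed.

Lemma inFnonN_zscale_reg r u : prime p -> r != 0 -> inF tau u ->
  inFnonN tau N (zscale r u) -> inFnonN tau N u.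
Proof.
move=> p_prime r_neq0 u_inF [_ ru_nonN]; split=> // j tau_j_N.
apply/ffunP => g; apply: (zp_lreg p_prime r_neq0).
by move/ffunP/(_ g): (ru_nonN j tau_j_N); rewrite !ffunE mulr0.
Qed.

Hypotheses (p_prime : prime p) (cardN : #|N| = p) (cardG : #|[set: gT]| = (p * p)%N).
Hypothesis tau_valid : forall j, validI p (tau j).

Lemma ghat_gmul_nonN x j : inFnonN tau N x -> gmul (ghat p N) (x j) = 0.
Proof.
move=> [x_inF x_nonN]; have [z xj] := x_inF j.
case tau_j: (tau j) (x_nonN j) (tau_valid j) xj => [H|] xj0 /= cardH xj;
  last by rewrite xj0 ?gmul0r.
have [eqHN|neqHN] := boolP ((H : {set gT}) == N); first by rewrite xj0 ?gmul0r.
have [trivNH NH] := prime_order_complement p_prime cardN (eqP cardH) cardG neqHN.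
by rewrite xj -gmulA (ghat_gmul_eps_complement cardN trivNH NH) gmul0l.
Qed.

Lemma zscale_p_idealmul x : U x -> inFnonN tau N x -> INU (zscale p%:R x).
Proof.
move=> Ux x_nonN; exists 1%N, (fun=> \sum_(h in N) (gelt p 1 - gelt p h)), (fun=> x).
split=> [_|]; first by split; [apply: augI_sum_aug | ].
rewrite big_ord1; apply/ffunP => j; apply/ffunP => g.
rewrite [gactF _ _ _]ffunE gmul_sum_aug (ghat_gmul_nonN j x_nonN) subr0.
by rewrite ffunMnE cardN !ffunE mulr_natl.
Qed.

End AugmentationSubmodule.

Theorem mainTheorem6 (p : nat) (gT : finGroupType) (n c : gT)
    (V : vectType 'F_p) (rho : gT -> 'End(V))
    (Vi : option {group gT} -> {vspace V})
    (J : finType) (tau : J -> option {group gT})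
    (f : FF p gT J -> V) :
  prime p ->
  #[n]%g = p -> #[c]%g = p -> (<[n]> \x <[c]>)%g = [set: gT] ->
  is_rep rho -> is_diagram rho Vi ->
  (forall j, validI p (tau j)) ->
  is_diagram_cover tau rho Vi f ->
  let U : FF p gT J -> Prop := fun x => inF tau x /\ f x = 0 in
  let INU : FF p gT J -> Prop := idealmul (@augI p gT <[n]>%g) U in
  (forall x, INU x -> U x /\ inFnonN tau <[n]>%g x) /\
  ((forall x, U x -> inFnonN tau <[n]>%g x -> INU x) <->
   (forall r : padicInt p, r != 0 -> forall u, U u -> INU (zscale r u) -> INU u)).
Proof.
move=> p_prime ord_n ord_c NxC _ _ tau_valid [fD f_gact _] U INU.
have abG : abelian [set: gT].
  by case/dprodP: NxC => _ <- cNC _; rewrite abelianM !cycle_abelian cNC.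
have cardN : #|<[n]>%G| = p by rewrite -ord_n.
have cardG : #|[set: gT]| = (p * p)%N.
  by rewrite -(dprod_card NxC); exact: (congr2 muln ord_n ord_c).
have INU_sub x (INUx : INU x) : U x /\ inFnonN tau <[n]>%g x :=
  conj (idealmul_augI_ker abG fD f_gact INUx) (idealmul_augI_nonN abG fD f_gact INUx).
split=> //; split=> [eqINU r r_neq0 u Uu /INU_sub[_ ru_nonN] | torsion_free x Ux x_nonN].
  apply: eqINU => //; case: Uu => u_inF _.
  exact: inFnonN_zscale_reg p_prime r_neq0 u_inF ru_nonN.
apply: (torsion_free _ (zp_natr_p_neq0 p_prime)) => //.
exact: zscale_p_idealmul p_prime cardN cardG tau_valid x Ux x_nonN.
Qed.
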